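(* If \(A\) is a finite geometrically proper set of positive bump functions in \(\operatorname{Homeo}_+(I)\), then the maximal stretched transition chains of \(A\) (regarded as subsets of \(A\)) partition the set of nonisolated elements of \(A\).
   Context: \(I=[0,1]\). A positive bump is an element of \(\operatorname{Homeo}_+(I)\) whose support \(\{t: ta\neq t\}\) is a single open interval \((x,y)\) on which \(ta>t\); its transition points are \(x\) (left) and \(y\) (right). A transition point of \(A\) is a transition point of some element of \(A\). \(A\) is geometrically proper if no point is a left transition point of two distinct elements of \(A\), nor a right transition point of two distinct elements. An element of \(A\) is isolated if its support contains no transition point of \(A\). A sequence \((a_i\mid i\le k)\) of nonisolated elements of \(A\), with \(\operatorname{supt}(a_i)=(x_i,y_i)\), is a stretched transition chain of \(A\) if (1) for all \(i<k\), \(x_i<x_{i+1}<y_i<y_{i+1}\), and (2) no transition point of \(A\) lies in any interval \((x_{i+1},y_i)\). It is maximal if it is maximal under containment when regarded as a subset of \(A\). *)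

From Stdlib Require Import Reals List.
Open Scope R_scope.

(* Convention: an element of Homeo_+(I), I = [0,1], is represented by a
   function f : R -> R that is the identity outside I.  This makes the
   representation injective (two such functions are equal iff they agree
   on I). *)

Definition inI (t : R) : Prop := 0 <= t <= 1.

Definition continuous_on_I (f : R -> R) : Prop :=
  forall t, inI t -> forall eps, 0 < eps ->
    exists delta, 0 < delta /\
      forall s, inI s -> Rabs (s - t) < delta -> Rabs (f s - f t) < eps.

Definition homeo_plus (f : R -> R) : Prop :=
  (forall t, ~ inI t -> f t = t) /\
  (forall t, inI t -> inI (f t)) /\
  continuous_on_I f /\
  (exists g : R -> R,
      (forall t, inI t -> inI (g t)) /\
      (forall t, inI t -> g (f t) = t) /\
      (forall t, inI t -> f (g t) = t) /\
      continuous_on_I g) /\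
  (forall s t, inI s -> inI t -> s < t -> f s < f t).

Definition supt (f : R -> R) (t : R) : Prop := f t <> t.

Definition bump_on (f : R -> R) (x y : R) : Prop :=
  x < y /\
  (forall t, supt f t <-> x < t < y) /\
  (forall t, x < t < y -> f t > t).

Definition positive_bump (f : R -> R) : Prop :=
  homeo_plus f /\ exists x y, bump_on f x y.

Definition left_tp (f : R -> R) (p : R) : Prop := exists y, bump_on f p y.
Definition right_tp (f : R -> R) (p : R) : Prop := exists x, bump_on f x p.

Definition fin_set (A : (R -> R) -> Prop) : Prop :=
  exists l : list (R -> R), forall f, A f <-> In f l.

Definition tp_of (A : (R -> R) -> Prop) (p : R) : Prop :=
  exists a, A a /\ (left_tp a p \/ right_tp a p).

Definition geometrically_proper (A : (R -> R) -> Prop) : Prop :=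
  (forall a b p, A a -> A b -> left_tp a p -> left_tp b p -> a = b) /\
  (forall a b p, A a -> A b -> right_tp a p -> right_tp b p -> a = b).

Definition isolated (A : (R -> R) -> Prop) (a : R -> R) : Prop :=
  A a /\ forall t, supt a t -> ~ tp_of A t.

Definition nonisolated (A : (R -> R) -> Prop) (a : R -> R) : Prop :=
  A a /\ ~ isolated A a.

Definition chain_step (A : (R -> R) -> Prop) (a b : R -> R) : Prop :=
  exists xa ya xb yb,
    bump_on a xa ya /\ bump_on b xb yb /\
    xa < xb /\ xb < ya /\ ya < yb /\
    (forall t, xb < t < ya -> ~ tp_of A t).

Fixpoint chain_from (A : (R -> R) -> Prop) (a : R -> R) (l : list (R -> R))
  : Prop :=
  match l with
  | nil => True
  | b :: l' => chain_step A a b /\ chain_from A b l'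
  end.

Definition stretched_chain (A : (R -> R) -> Prop) (c : list (R -> R)) : Prop :=
  match c with
  | nil => False
  | a :: l => (forall f, In f c -> nonisolated A f) /\ chain_from A a l
  end.

Definition maximal_stretched_chain (A : (R -> R) -> Prop) (c : list (R -> R))
  : Prop :=
  stretched_chain A c /\
  ~ (exists c', stretched_chain A c' /\
                (forall f, In f c -> In f c') /\
                (exists f, In f c' /\ ~ In f c)).

(* Under geometric properness a chain step determines its successor and its
   predecessor: the next bump must start at the last transition point inside
   the current support, and only one element of A starts there (symmetrically
   for right endpoints).  Hence a maximal chain contains, with any element,
   every nonisolated element one step before or after it, so two maximal
   chains that meet absorb each other.  Left endpoints strictly increase along
   a chain, so chains have no repetitions and are no longer than A; any chain,
   in particular the one-element chain of a nonisolated bump, therefore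
   extends to a maximal one. *)

From Stdlib Require Import Reals List Lra Lia Classical.
Import ListNotations.
Open Scope R_scope.

Lemma open_interval_incl x y x' y' :
  x < y -> (forall t, x < t < y -> x' < t < y') -> x' <= x /\ y <= y'.
Proof.
  intros Hxy Hincl; split; apply Rnot_lt_le; intro Hlt.
  - pose proof (Rmin_l x' y); pose proof (Rmin_r x' y).
    assert (x < Rmin x' y) by (apply Rmin_glb_lt; lra).
    destruct (Hincl ((x + Rmin x' y) / 2)); lra.
  - pose proof (Rmax_l x y'); pose proof (Rmax_r x y').
    assert (Rmax x y' < y) by (apply Rmax_lub_lt; lra).
    destruct (Hincl ((Rmax x y' + y) / 2)); lra.
Qed.

Lemma bump_on_unique f x y x' y' :
  bump_on f x y -> bump_on f x' y' -> x = x' /\ y = y'.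
Proof.
  intros [Hxy [Hs _]] [Hxy' [Hs' _]].
  destruct (open_interval_incl x y x' y' Hxy) as [H1 H2].
  { intros t Ht; apply Hs', Hs, Ht. }
  destruct (open_interval_incl x' y' x y Hxy') as [H3 H4].
  { intros t Ht; apply Hs, Hs', Ht. }
  lra.
Qed.

Section Chains.

Variable A : (R -> R) -> Prop.

Lemma stretched_chain_nonisolated c f :
  stretched_chain A c -> In f c -> nonisolated A f.
Proof. destruct c as [|a l]; [contradiction|]. intros [Hn _]; apply Hn. Qed.

Lemma chain_from_left_lt a l xa ya :
  chain_from A a l -> bump_on a xa ya ->
  forall f xf yf, In f l -> bump_on f xf yf -> xa < xf.
Proof.
  revert a xa ya; induction l as [|b l IH]; intros a xa ya Hc Ba f xf yf Hf Bf;
    [contradiction|].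
  destruct Hc as [(xa'&ya'&xb&yb&Ba'&Bb&Hlt&_) Hc].
  destruct (bump_on_unique _ _ _ _ _ Ba Ba') as [<- <-].
  destruct Hf as [<-|Hf].
  - destruct (bump_on_unique _ _ _ _ _ Bb Bf) as [<- _]; exact Hlt.
  - pose proof (IH b xb yb Hc Bb f xf yf Hf Bf); lra.
Qed.

Lemma chain_from_NoDup a l : chain_from A a l -> NoDup (a :: l).
Proof.
  revert a; induction l as [|b l IH]; intros a Hc.
  - repeat constructor; intros [].
  - constructor; [|apply IH, Hc].
    intro Ha.
    pose proof Hc as [(xa&ya&_&_&Ba&_) _].
    pose proof (chain_from_left_lt a (b :: l) xa ya Hc Ba a xa ya Ha Ba); lra.
Qed.

Lemma stretched_chain_NoDup c : stretched_chain A c -> NoDup c.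
Proof.
  destruct c as [|a l]; [contradiction|]. intros [_ Hc]; exact (chain_from_NoDup a l Hc).
Qed.

Lemma chain_from_succ_or_snoc a l f :
  chain_from A a l -> In f (a :: l) ->
  (exists h, In h (a :: l) /\ chain_step A f h) \/
  (forall g, chain_step A f g -> chain_from A a (l ++ [g])).
Proof.
  revert a; induction l as [|b l IH]; intros a Hc Hf.
  - destruct Hf as [<-|[]]. right; intros g Hg; split; [exact Hg | exact I].
  - destruct Hf as [<-|Hf].
    { left; exists b; split; [right; left; reflexivity | apply Hc]. }
    destruct (IH b (proj2 Hc) Hf) as [[h [Hh Hstep]]|Hsnoc].
    + left; exists h; split; [right; exact Hh | exact Hstep].
    + right; intros g Hg; split; [apply Hc | apply Hsnoc, Hg].
Qed.

Lemma chain_from_pred a l f :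
  chain_from A a l -> In f (a :: l) ->
  f = a \/ exists h, In h (a :: l) /\ chain_step A h f.
Proof.
  revert a; induction l as [|b l IH]; intros a Hc Hf.
  - destruct Hf as [<-|[]]; left; reflexivity.
  - destruct Hf as [<-|Hf]; [left; reflexivity|right].
    destruct (IH b (proj2 Hc) Hf) as [->|[h [Hh Hstep]]].
    + exists a; split; [left; reflexivity | apply Hc].
    + exists h; split; [right; exact Hh | exact Hstep].
Qed.

Lemma chain_from_iff (P : (R -> R) -> Prop) a l :
  chain_from A a l ->
  (forall x y, In x (a :: l) -> In y (a :: l) -> chain_step A x y -> (P x <-> P y)) ->
  forall x y, In x (a :: l) -> In y (a :: l) -> (P x <-> P y).
Proof.
  intros Hc Hstep.
  assert (Hhead : forall f, In f (a :: l) -> (P a <-> P f)).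
  { revert a Hc Hstep; induction l as [|b l IH]; intros a Hc Hstep f Hf.
    - destruct Hf as [<-|[]]; tauto.
    - destruct Hf as [<-|Hf]; [tauto|].
      assert (P a <-> P b).
      { apply Hstep; [left; reflexivity | right; left; reflexivity | apply Hc]. }
      assert (P b <-> P f).
      { apply IH; [apply Hc | | exact Hf].
        intros x y Hx Hy; apply Hstep; right; assumption. }
      tauto. }
  intros x y Hx Hy; rewrite <- (Hhead x Hx), <- (Hhead y Hy); tauto.
Qed.

Lemma maximal_chain_incl c c' :
  maximal_stretched_chain A c -> stretched_chain A c' -> incl c c' -> incl c' c.
Proof.
  intros [_ Hmax] Hc' Hincl f Hf.
  apply NNPP; intro Hnf; apply Hmax; exists c'; eauto.
Qed.

Lemma stretched_chain_extends_to_maximal L c :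
  (forall f, A f -> In f L) -> stretched_chain A c ->
  exists c', maximal_stretched_chain A c' /\ incl c c'.
Proof.
  intros HL.
  assert (Hlen : forall c, stretched_chain A c -> (length c <= length L)%nat).
  { intros d Hd; apply NoDup_incl_length; [apply stretched_chain_NoDup, Hd|].
    intros f Hf; apply HL, (stretched_chain_nonisolated d f Hd Hf). }
  remember (length L - length c)%nat as n eqn:Hn.
  revert c Hn; induction n as [n IH] using (well_founded_induction Wf_nat.lt_wf).
  intros c Hn Hc.
  destruct (classic (maximal_stretched_chain A c)) as [Hmax|Hnmax].
  { exists c; split; [exact Hmax | apply incl_refl]. }
  apply not_and_or in Hnmax; destruct Hnmax as [|Hext]; [contradiction|].
  apply NNPP in Hext; destruct Hext as (c' & Hc' & Hincl & f & Hf & Hnf).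
  assert (Hlt : (length c < length c')%nat).
  { apply (NoDup_incl_length (l := f :: c)); [constructor; auto; apply stretched_chain_NoDup, Hc|].
    intros g [<-|Hg]; auto. }
  destruct (IH (length L - length c')%nat) with c' as (c'' & Hmax & Hincl');
    [pose proof (Hlen c' Hc'); lia | reflexivity | exact Hc' |].
  exists c''; split; [exact Hmax | intros g Hg; apply Hincl', Hincl, Hg].
Qed.

Hypothesis GP : geometrically_proper A.

Lemma chain_step_succ_unique f g h :
  A g -> A h -> chain_step A f g -> chain_step A f h -> g = h.
Proof.
  intros Ag Ah (xf&yf&xg&yg&Bf&Bg&_&Hg&_&Hng) (xf'&yf'&xh&yh&Bf'&Bh&_&Hh&_&Hnh).
  destruct (bump_on_unique _ _ _ _ _ Bf Bf') as [<- <-].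
  assert (Tg : tp_of A xg) by (exists g; split; [|left; exists yg]; auto).
  assert (Th : tp_of A xh) by (exists h; split; [|left; exists yh]; auto).
  destruct (Rtotal_order xg xh) as [Hlt|[<-|Hlt]].
  - exfalso; apply (Hng xh); [lra | exact Th].
  - apply (proj1 GP g h xg); [| | exists yg | exists yh]; auto.
  - exfalso; apply (Hnh xg); [lra | exact Tg].
Qed.

Lemma chain_step_pred_unique f g h :
  A g -> A h -> chain_step A g f -> chain_step A h f -> g = h.
Proof.
  intros Ag Ah (xg&yg&xf&yf&Bg&Bf&_&Hg&_&Hng) (xh&yh&xf'&yf'&Bh&Bf'&_&Hh&_&Hnh).
  destruct (bump_on_unique _ _ _ _ _ Bf Bf') as [<- <-].
  assert (Tg : tp_of A yg) by (exists g; split; [|right; exists xg]; auto).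
  assert (Th : tp_of A yh) by (exists h; split; [|right; exists xh]; auto).
  destruct (Rtotal_order yg yh) as [Hlt|[<-|Hlt]].
  - exfalso; apply (Hnh yg); [lra | exact Tg].
  - apply (proj2 GP g h yg); [| | exists xg | exists xh]; auto.
  - exfalso; apply (Hng yh); [lra | exact Th].
Qed.

Lemma maximal_chain_succ_closed c x y :
  maximal_stretched_chain A c -> nonisolated A y -> chain_step A x y ->
  In x c -> In y c.
Proof.
  intros Hmax Ny Hstep Hx.
  pose proof Hmax as [Hc _]; destruct c as [|a l]; [contradiction|].
  destruct Hc as [Hn Hch].
  destruct (chain_from_succ_or_snoc a l x Hch Hx) as [[h [Hh Hxh]]|Hsnoc].
  - replace y with h; [exact Hh|].
    apply (chain_step_succ_unique x); [apply Hn, Hh | apply Ny | exact Hxh | exact Hstep].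
  - apply (maximal_chain_incl (a :: l) (a :: l ++ [y]) Hmax).
    + split; [|apply Hsnoc, Hstep].
      intros f [<-|Hf]; [apply Hn; left; reflexivity|].
      apply in_app_or in Hf; destruct Hf as [Hf|[<-|[]]]; [apply Hn; right|]; auto.
    + intros f [<-|Hf]; [left | right; apply in_or_app]; auto.
    + right; apply in_or_app; right; left; reflexivity.
Qed.

Lemma maximal_chain_pred_closed c x y :
  maximal_stretched_chain A c -> nonisolated A x -> chain_step A x y ->
  In y c -> In x c.
Proof.
  intros Hmax Nx Hstep Hy.
  pose proof Hmax as [Hc _]; destruct c as [|a l]; [contradiction|].
  destruct Hc as [Hn Hch].
  destruct (chain_from_pred a l y Hch Hy) as [->|[h [Hh Hhy]]].
  - apply (maximal_chain_incl (a :: l) (x :: a :: l) Hmax).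
    + split; [intros f [<-|Hf]; auto | split; assumption].
    + intros f Hf; right; exact Hf.
    + left; reflexivity.
  - replace x with h; [exact Hh|].
    apply (chain_step_pred_unique y); [apply Hn, Hh | apply Nx | exact Hhy | exact Hstep].
Qed.

Lemma maximal_chains_meet_incl c1 c2 a :
  maximal_stretched_chain A c1 -> maximal_stretched_chain A c2 ->
  In a c1 -> In a c2 -> incl c1 c2.
Proof.
  intros [Hc1 _] M2 Ha1 Ha2 f Hf.
  destruct c1 as [|b l]; [contradiction|]; destruct Hc1 as [Hn Hch].
  apply (chain_from_iff (fun g => In g c2) b l Hch) with a; auto.
  intros x y Hx Hy Hxy; split.
  - apply (maximal_chain_succ_closed c2 x y M2); auto.
  - apply (maximal_chain_pred_closed c2 x y M2); auto.
Qed.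

End Chains.

Theorem proposition4p1 (A : (R -> R) -> Prop) :
  fin_set A ->
  (forall a, A a -> positive_bump a) ->
  geometrically_proper A ->
  (* the blocks (underlying sets of maximal chains) cover exactly the
     nonisolated elements ... *)
  (forall a, nonisolated A a <->
     exists c, maximal_stretched_chain A c /\ In a c) /\
  (* ... and two blocks that meet coincide *)
  (forall c1 c2, maximal_stretched_chain A c1 -> maximal_stretched_chain A c2 ->
     (exists a, In a c1 /\ In a c2) ->
     forall f, In f c1 <-> In f c2).
Proof.
  intros [L HL] _ GP; split.
  - intro a; split.
    + intro Na.
      assert (Hsingle : stretched_chain A [a]).
      { split; [intros f [<-|[]]; exact Na | exact I]. }
      destruct (stretched_chain_extends_to_maximal A L [a]) as (c & Hc & Hincl);
        [intro f; apply HL | exact Hsingle |].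
      exists c; split; [exact Hc | apply Hincl; left; reflexivity].
    + intros (c & [Hc _] & Ha); exact (stretched_chain_nonisolated A c a Hc Ha).
  - intros c1 c2 M1 M2 [a [Ha1 Ha2]] f; split.
    + apply (maximal_chains_meet_incl A GP c1 c2 a); assumption.
    + apply (maximal_chains_meet_incl A GP c2 c1 a); assumption.
Qed.
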